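(* Let $\kappa$ be a regular uncountable cardinal and let $\langle T^\eta\mid\eta<\kappa\rangle$ be a sequence of streamlined $\kappa$-subtrees of a given streamlined $\kappa$-Souslin tree $T$. Then there are $\eta<\rho<\kappa$ such that $|T^\eta\cap T^\rho|=\kappa$.
   Context: $H_\kappa$ is the collection of sets of hereditary cardinality $<\kappa$. A streamlined tree is a set $T\subseteq{}^{<\kappa}H_\kappa$ closed under restrictions $t\mapsto t\restriction\beta$, ordered by proper initial segment; $T_\alpha=\{x\in T\mid\mathrm{dom}(x)=\alpha\}$. A streamlined $\kappa$-tree satisfies $0<|T_\alpha|<\kappa$ for all $\alpha<\kappa$; a streamlined $\kappa$-subtree of $T$ is a downward-closed subset of $T$ that is itself a streamlined $\kappa$-tree. A streamlined $\kappa$-Souslin tree is a streamlined $\kappa$-tree with no $f:\kappa\to H_\kappa$ such that $f\restriction\beta\in T$ for all $\beta<\kappa$, and with no antichain (set of pairwise $\subseteq$-incomparable nodes) of size $\kappa$. *)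

From Stdlib Require Import Classical.

(* ---------- The cardinal kappa ----------
   kappa is represented by a type K of ordinals (the ordinals < kappa),
   strictly well-ordered by lt. *)

Definition card_ge_kappa {K U : Type} (A : U -> Prop) : Prop :=
  exists f : K -> U, (forall k, A (f k)) /\ (forall k1 k2, f k1 = f k2 -> k1 = k2).

Definition card_le_kappa {K U : Type} (A : U -> Prop) : Prop :=
  exists g : U -> K, forall a b, A a -> A b -> g a = g b -> a = b.

Definition card_lt_kappa {K U : Type} (A : U -> Prop) : Prop :=
  ~ @card_ge_kappa K U A.

Definition card_eq_kappa {K U : Type} (A : U -> Prop) : Prop :=
  @card_ge_kappa K U A /\ @card_le_kappa K U A.

Definition strict_well_order {K : Type} (lt : K -> K -> Prop) : Prop :=
  (forall a, ~ lt a a) /\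
  (forall a b c, lt a b -> lt b c -> lt a c) /\
  (forall a b, lt a b \/ a = b \/ lt b a) /\
  well_founded lt.

Definition regular_uncountable_cardinal (K : Type) (lt : K -> K -> Prop) : Prop :=
  strict_well_order lt /\
  (* kappa is a cardinal: every proper initial segment has size < kappa *)
  (forall a : K, @card_lt_kappa K K (fun b => lt b a)) /\
  (* regular: every subset of size < kappa is bounded below kappa *)
  (forall A : K -> Prop, @card_lt_kappa K K A -> exists a, forall b, A b -> lt b a) /\
  (~ exists g : K -> nat, forall a b, g a = g b -> a = b).

(* ---------- Streamlined trees ----------
   A node x : alpha -> X (alpha < kappa) is encoded as a partial function
   t : K -> option X whose domain {beta | t beta <> None} is exactly
   {beta | beta < alpha}. *)

Section Trees.
Context {K X : Type} (lt : K -> K -> Prop).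

Definition node := K -> option X.

Definition has_dom (t : node) (alpha : K) : Prop :=
  forall beta, t beta <> None <-> lt beta alpha.

Definition is_restr (t : node) (beta : K) (s : node) : Prop :=
  forall gamma, (lt gamma beta -> s gamma = t gamma) /\
                (~ lt gamma beta -> s gamma = None).

Definition initseg (s t : node) : Prop :=
  forall gamma, s gamma <> None -> s gamma = t gamma.

Definition streamlined_tree (T : node -> Prop) : Prop :=
  (forall t, T t -> exists alpha, has_dom t alpha) /\
  (forall t beta s, T t -> is_restr t beta s -> T s).

Definition level (T : node -> Prop) (alpha : K) : node -> Prop :=
  fun t => T t /\ has_dom t alpha.

Definition streamlined_kappa_tree (T : node -> Prop) : Prop :=
  streamlined_tree T /\
  (forall alpha, (exists t, level T alpha t) /\
                 @card_lt_kappa K node (level T alpha)).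

Definition streamlined_kappa_subtree (T S : node -> Prop) : Prop :=
  (forall t, S t -> T t) /\
  (forall s t, S t -> T s -> initseg s t -> S s) /\
  streamlined_kappa_tree S.

Definition is_branch (T : node -> Prop) (f : K -> X) : Prop :=
  forall beta, exists s, T s /\
    forall gamma, (lt gamma beta -> s gamma = Some (f gamma)) /\
                  (~ lt gamma beta -> s gamma = None).

Definition antichain (T A : node -> Prop) : Prop :=
  (forall t, A t -> T t) /\
  (forall s t, A s -> A t -> s <> t -> ~ initseg s t /\ ~ initseg t s).

Definition streamlined_kappa_Souslin_tree (T : node -> Prop) : Prop :=
  streamlined_kappa_tree T /\
  (~ exists f : K -> X, is_branch T f) /\
  (~ exists A : node -> Prop, antichain T A /\ @card_eq_kappa K node A).

End Trees.

From Stdlib Require Import Classical ClassicalEpsilon FunctionalExtensionality IndefiniteDescription.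

(* Every streamlined kappa-subtree S of the Souslin tree T contains the whole cone of T above one of its nodes, and
   that cone has size kappa. Indeed, the minimal nodes of T outside S form an antichain, so their heights are bounded
   by some a0 and S contains the cone above each of its nodes of height a0; since S has size kappa and the nodes of
   height below a0 are fewer than kappa, one of these cones has size kappa. Choosing such a node x_eta for every eta,
   the x_eta cannot form an antichain of size kappa, so some x_eta lies below some x_rho, and the cone above x_rho
   is contained in both T^eta and T^rho. *)

Lemma uncountable_nontrivial (K : Type) :
  ~ (exists g : K -> nat, forall a b, g a = g b -> a = b) -> exists a b : K, a <> b.
Proof.
  intro Hunc. apply NNPP. intro Htriv. apply Hunc.
  exists (fun _ => 0). intros a b _. apply NNPP. intro Hab. eauto.
Qed.

Section Kappa.
Context {K : Type} {lt : K -> K -> Prop}.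
Hypothesis lt_wo : strict_well_order lt.
Hypothesis K_nontrivial : exists a b : K, a <> b.
Hypothesis initial_segment_small : forall a : K, @card_lt_kappa K K (fun b => lt b a).
Hypothesis kappa_regular :
  forall A : K -> Prop, @card_lt_kappa K K A -> exists a, forall b, A b -> lt b a.

Local Notation small A := (@card_lt_kappa K _ A).
Local Notation large A := (@card_ge_kappa K _ A).

Lemma lt_irrefl a : ~ lt a a.
Proof. apply lt_wo. Qed.

Lemma lt_trans a b c : lt a b -> lt b c -> lt a c.
Proof. apply lt_wo. Qed.

Lemma lt_total a b : lt a b \/ a = b \/ lt b a.
Proof. apply lt_wo. Qed.

Lemma lt_wf : well_founded lt.
Proof. apply lt_wo. Qed.

Lemma le_lt_trans a b c : ~ lt b a -> lt b c -> lt a c.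
Proof.
  intros Hba Hbc. destruct (lt_total a b) as [H | [-> | H]]; [eauto using lt_trans | exact Hbc | contradiction].
Qed.

Lemma lt_le_trans a b c : lt a b -> ~ lt c b -> lt a c.
Proof.
  intros Hab Hcb. destruct (lt_total b c) as [H | [<- | H]]; [eauto using lt_trans | exact Hab | contradiction].
Qed.

Lemma K_inhabited : inhabited K.
Proof. destruct K_nontrivial as [a _]. exact (inhabits a). Qed.

Lemma lt_minimal (P : K -> Prop) :
  (exists x, P x) -> exists m, P m /\ forall y, P y -> ~ lt y m.
Proof.
  intros [x Px]. induction x as [x IH] using (well_founded_ind lt_wf).
  destruct (classic (exists y, P y /\ lt y x)) as [[y [Py Hyx]] | Hmin].
  - exact (IH y Hyx Py).
  - exists x. split; [exact Px |]. intros y Py Hyx. eauto.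
Qed.

Lemma card_ge_kappa_sub (U : Type) (A B : U -> Prop) :
  (forall u, A u -> B u) -> large A -> large B.
Proof. intros HAB [f [Hf Hinj]]. exists f. auto. Qed.

Lemma card_lt_kappa_sub (U : Type) (A B : U -> Prop) :
  (forall u, A u -> B u) -> small B -> small A.
Proof. intros HAB HB HA. exact (HB (card_ge_kappa_sub U A B HAB HA)). Qed.

Lemma card_lt_kappa_image (U V : Type) (g : U -> V) (A : U -> Prop) :
  small A -> small (fun v => exists a, A a /\ g a = v).
Proof.
  intros HA [f [Hf Hinj]].
  destruct (functional_choice (fun k a => A a /\ g a = f k) Hf) as [h Hh].
  apply HA. exists h. split.
  - intro k. apply Hh.
  - intros k1 k2 E. apply Hinj.
    destruct (Hh k1) as [_ <-], (Hh k2) as [_ <-]. now rewrite E.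
Qed.

Lemma card_lt_kappa_singleton (U : Type) (u : U) : small (fun v => v = u).
Proof.
  intros [f [Hf Hinj]]. destruct K_nontrivial as [a [b Hab]].
  apply Hab, Hinj. now rewrite (Hf a), (Hf b).
Qed.

Lemma exists_gt a : exists c, lt a c.
Proof.
  destruct (kappa_regular _ (card_lt_kappa_singleton K a)) as [c Hc].
  exists c. now apply Hc.
Qed.

(* By regularity, each of the fewer than kappa fibres is bounded by some b i; the b i are bounded by c, and the
   injection f would then send c into the fibre of f c below c. *)
Lemma card_lt_kappa_union (I U : Type) (J : I -> Prop) (A : U -> Prop) (p : U -> I) :
  small J -> (forall a, A a -> J (p a)) ->
  (forall i, J i -> small (fun a => A a /\ p a = i)) -> small A.
Proof.
  intros HJ Hp Hfib [f [Hf Hinj]].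
  assert (Hbound : forall i, exists c, J i -> forall k, p (f k) = i -> lt k c).
  { intro i. destruct (classic (J i)) as [Ji | Ji].
    - assert (Hk : small (fun k => p (f k) = i)).
      { intros [g [Hg Hginj]]. apply (Hfib i Ji). exists (fun k => f (g k)). split.
        - intro k. split; auto.
        - intros k1 k2 E. apply Hginj, Hinj, E. }
      destruct (kappa_regular _ Hk) as [c Hc]. exists c. auto.
    - destruct K_inhabited as [c]. exists c. contradiction. }
  destruct (functional_choice _ Hbound) as [b Hb].
  destruct (kappa_regular _ (card_lt_kappa_image I K b J HJ)) as [c Hc].
  apply (lt_irrefl c), (lt_trans _ (b (p (f c)))).
  - apply Hb; auto.
  - apply Hc. eauto.
Qed.

Lemma card_lt_kappa_rank_le (U : Type) (A : U -> Prop) (r : U -> K) :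
  (forall b, small (fun a => A a /\ r a = b)) ->
  forall c, small (fun a => A a /\ ~ lt c (r a)).
Proof.
  intros Hfib c. destruct (exists_gt c) as [d Hcd].
  apply (card_lt_kappa_union K U (fun b => lt b d) _ r (initial_segment_small d)).
  - intros a [_ Hac]. exact (le_lt_trans _ _ _ Hac Hcd).
  - intros i _. apply (card_lt_kappa_sub _ _ (fun a => A a /\ r a = i)); [| apply Hfib].
    intros a [[Ha _] Hr]. auto.
Qed.

Section Enumeration.
Variables (U : Type) (u0 : U) (A : U -> Prop) (r : U -> K).

Definition fresh_min (used : U -> Prop) (a : U) : Prop :=
  A a /\ ~ used a /\ forall b, A b -> ~ used b -> ~ lt (r b) (r a).

(* [enum k] is an element of [A] of least rank not enumerated before [k] (junk [u0] once [A] is exhausted). *)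
Definition enum : K -> U :=
  Fix lt_wf (fun _ => U)
    (fun k prev => epsilon (inhabits u0) (fresh_min (fun a => exists j (h : lt j k), prev j h = a))).

Lemma enum_eq k :
  enum k = epsilon (inhabits u0) (fresh_min (fun a => exists j (h : lt j k), enum j = a)).
Proof.
  unfold enum at 1. rewrite Fix_eq; [reflexivity |].
  intros x f g Hfg.
  replace g with f; [reflexivity |].
  apply functional_extensionality_dep. intro y.
  apply functional_extensionality_dep. intro h. apply Hfg.
Qed.

Section Missed.
Variable a : U.
Hypothesis Aa : A a.
Hypothesis a_missed : forall k, enum k <> a.

Lemma enum_fresh_min k : fresh_min (fun b => exists j (h : lt j k), enum j = b) (enum k).
Proof.
  rewrite enum_eq. apply epsilon_spec.
  set (used := fun b => exists j (h : lt j k), enum j = b).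
  destruct (lt_minimal (fun c => exists b, A b /\ ~ used b /\ r b = c))
    as [m [[b [Ab [Hb <-]]] Hmin]].
  { exists (r a), a. split; [exact Aa |]. split; [| reflexivity].
    intros [j [_ E]]. exact (a_missed j E). }
  exists b. repeat split; auto.
  intros b' Ab' Hb'. apply Hmin. eauto.
Qed.

Lemma enum_rank_le k : A (enum k) /\ ~ lt (r a) (r (enum k)).
Proof.
  destruct (enum_fresh_min k) as [Ak [_ Hmin]]. split; [exact Ak |].
  apply Hmin; [exact Aa |]. intros [j [_ E]]. exact (a_missed j E).
Qed.

Lemma enum_injective k1 k2 : enum k1 = enum k2 -> k1 = k2.
Proof.
  intro E. destruct (lt_total k1 k2) as [H | [H | H]]; [exfalso | exact H | exfalso].
  - apply (enum_fresh_min k2). eauto.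
  - apply (enum_fresh_min k1). eauto.
Qed.

End Missed.

(* Enumerating [A] by increasing rank exhausts it: an element left out would bound the ranks of the kappa
   distinct values of [enum]. *)
Lemma card_le_kappa_of_rank :
  (forall c, small (fun b => A b /\ ~ lt c (r b))) -> @card_le_kappa K U A.
Proof.
  intro Hsmall.
  destruct (classic (forall a, A a -> exists k, enum k = a)) as [Hall | Hmissed].
  - exists (fun a => epsilon K_inhabited (fun k => enum k = a)).
    intros a b Aa Ab E.
    rewrite <- (epsilon_spec K_inhabited (fun k => enum k = a) (Hall a Aa)),
            <- (epsilon_spec K_inhabited (fun k => enum k = b) (Hall b Ab)), E.
    reflexivity.
  - exfalso. apply not_all_ex_not in Hmissed as [a Ha].
    apply imply_to_and in Ha as [Aa Hnot].
    assert (a_missed : forall k, enum k <> a) by (intros k E; eauto).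
    apply (Hsmall (r a)). exists enum. split.
    + exact (enum_rank_le a Aa a_missed).
    + exact (enum_injective a Aa a_missed).
Qed.

End Enumeration.

Section Trees.
Context {X : Type}.
Local Notation node := (@node K X).

Definition restr (t : node) (b : K) : node :=
  fun g => if excluded_middle_informative (lt g b) then t g else None.

Definition height (t : node) : K := epsilon K_inhabited (has_dom lt t).

Lemma restr_is_restr (t : node) b : is_restr lt t b (restr t b).
Proof. intro g. unfold restr. destruct excluded_middle_informative; tauto. Qed.

Lemma has_dom_unique (t : node) a b : has_dom lt t a -> has_dom lt t b -> a = b.
Proof.
  intros Ha Hb. destruct (lt_total a b) as [H | [H | H]]; [exfalso | exact H | exfalso].
  - apply (lt_irrefl a), Ha, Hb, H.
  - apply (lt_irrefl b), Hb, Ha, H.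
Qed.

Lemma height_eq (t : node) a : has_dom lt t a -> height t = a.
Proof.
  intro Ha. apply (has_dom_unique t); [| exact Ha].
  unfold height. apply epsilon_spec. eauto.
Qed.

Lemma has_dom_height (t : node) a : has_dom lt t a -> has_dom lt t (height t).
Proof. intro Ha. now rewrite (height_eq t a Ha). Qed.

Lemma has_dom_restr (t : node) a b : has_dom lt t a -> ~ lt a b -> has_dom lt (restr t b) b.
Proof.
  intros Ha Hab g. unfold restr.
  destruct excluded_middle_informative as [H | H]; split; try tauto.
  intros _. apply Ha. exact (lt_le_trans _ _ _ H Hab).
Qed.

Lemma restr_above (t : node) a b : has_dom lt t a -> ~ lt b a -> restr t b = t.
Proof.
  intros Ha Hba. apply functional_extensionality. intro g. unfold restr.
  destruct excluded_middle_informative as [H | H]; [reflexivity |].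
  destruct (classic (t g = None)) as [E | E]; [now rewrite E |].
  apply Ha in E. contradiction (lt_le_trans _ _ _ E Hba).
Qed.

Lemma restr_restr (t : node) a b : lt a b -> restr (restr t b) a = restr t a.
Proof.
  intro Hab. apply functional_extensionality. intro g. unfold restr.
  destruct (excluded_middle_informative (lt g a)) as [H | H]; [| reflexivity].
  destruct excluded_middle_informative; [reflexivity |]. exfalso. eauto using lt_trans.
Qed.

Lemma initseg_refl (s : node) : initseg s s.
Proof. now intros g _. Qed.

Lemma initseg_trans (s t u : node) : initseg s t -> initseg t u -> initseg s u.
Proof. intros Hst Htu g Hs. rewrite (Hst g Hs). apply Htu. now rewrite <- (Hst g Hs). Qed.

Lemma initseg_restr (t : node) b : initseg (restr t b) t.
Proof. intro g. unfold restr. destruct excluded_middle_informative; tauto. Qed.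

Lemma initseg_height_le (s t : node) a b :
  initseg s t -> has_dom lt s a -> has_dom lt t b -> ~ lt b a.
Proof.
  intros Hst Ha Hb Hba. apply Ha in Hba as Hs.
  apply (lt_irrefl b), Hb. now rewrite <- (Hst b Hs).
Qed.

Lemma initseg_eq_restr (s t : node) a : initseg s t -> has_dom lt s a -> s = restr t a.
Proof.
  intros Hst Ha. apply functional_extensionality. intro g. unfold restr.
  destruct excluded_middle_informative as [H | H].
  - apply Hst, Ha, H.
  - destruct (classic (s g = None)) as [E | E]; [exact E |]. apply Ha in E. contradiction.
Qed.

Lemma initseg_same_height (s t : node) a :
  initseg s t -> has_dom lt s a -> has_dom lt t a -> s = t.
Proof.
  intros Hst Hs Ht. rewrite (initseg_eq_restr s t a Hst Hs).
  exact (restr_above t a a Ht (lt_irrefl a)).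
Qed.

Lemma kappa_tree_large (S : node -> Prop) : streamlined_kappa_tree lt S -> large S.
Proof.
  intros [_ Hlevels].
  destruct (functional_choice (level lt S) (fun a => proj1 (Hlevels a))) as [f Hf].
  exists f. split.
  - intro k. apply Hf.
  - intros k1 k2 E. apply (has_dom_unique (f k1)); [apply Hf | rewrite E; apply Hf].
Qed.

Section KappaTree.
Variable T : node -> Prop.
Hypothesis T_tree : streamlined_kappa_tree lt T.

Lemma tree_has_height t : T t -> has_dom lt t (height t).
Proof.
  intro Tt. destruct T_tree as [[Hdom _] _].
  destruct (Hdom t Tt) as [a Ha]. exact (has_dom_height t a Ha).
Qed.

Lemma tree_restr t b : T t -> T (restr t b).
Proof. intro Tt. destruct T_tree as [[_ Hrestr] _]. exact (Hrestr t b _ Tt (restr_is_restr t b)). Qed.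

Lemma restr_cases t a : T t -> (lt (height t) a /\ restr t a = t) \/ has_dom lt (restr t a) a.
Proof.
  intro Tt. pose proof (tree_has_height t Tt) as Ht.
  destruct (classic (lt (height t) a)) as [H | H].
  - left. split; [exact H |]. apply (restr_above t (height t)); [exact Ht |].
    intro H'. exact (lt_irrefl a (lt_trans _ _ _ H' H)).
  - right. exact (has_dom_restr t (height t) a Ht H).
Qed.

Lemma tree_card_lt_height_le c : small (fun t => T t /\ ~ lt c (height t)).
Proof.
  apply card_lt_kappa_rank_le. intro b.
  apply (card_lt_kappa_sub _ _ (level lt T b)); [| apply T_tree].
  intros t [Tt <-]. split; [exact Tt | exact (tree_has_height t Tt)].
Qed.

Lemma tree_card_le (A : node -> Prop) : (forall t, A t -> T t) -> @card_le_kappa K node A.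
Proof.
  intro HAT.
  destruct (card_le_kappa_of_rank node (fun _ => None) T height tree_card_lt_height_le) as [g Hg].
  exists g. auto.
Qed.

Definition cone (x : node) : node -> Prop := fun t => T t /\ initseg x t.

Lemma cone_antimono x y : initseg x y -> forall t, cone y t -> cone x t.
Proof. intros Hxy t [Tt Hyt]. split; [exact Tt | exact (initseg_trans x y t Hxy Hyt)]. Qed.

Lemma card_eq_kappa_of_large_cone (A : node -> Prop) x :
  (forall t, A t -> T t) -> (forall t, cone x t -> A t) -> large (cone x) -> @card_eq_kappa K node A.
Proof.
  intros HAT Hcone Hlarge. split.
  - exact (card_ge_kappa_sub _ _ _ Hcone Hlarge).
  - exact (tree_card_le A HAT).
Qed.

Section Souslin.
Hypothesis no_kappa_antichain :
  ~ exists A : node -> Prop, antichain T A /\ @card_eq_kappa K node A.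

Lemma antichain_card_lt (A : node -> Prop) : antichain T A -> small A.
Proof.
  intros HA Hlarge. apply no_kappa_antichain.
  exists A. split; [exact HA |]. split; [exact Hlarge |]. apply tree_card_le, HA.
Qed.

Lemma family_comparable (x : K -> node) :
  (forall k, T (x k)) -> exists k1 k2, k1 <> k2 /\ initseg (x k1) (x k2).
Proof.
  intro Tx. apply NNPP. intro Hincomp.
  assert (Hinc : forall k1 k2, k1 <> k2 -> ~ initseg (x k1) (x k2))
    by (intros k1 k2 Hne Hi; apply Hincomp; eauto).
  apply (antichain_card_lt (fun t => exists k, x k = t)).
  - split.
    + intros t [k <-]. apply Tx.
    + intros s t [k1 <-] [k2 <-] Hne.
      assert (k1 <> k2) by (intros ->; contradiction).
      split; apply Hinc; auto.
  - exists x. split; [eauto |].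
    intros k1 k2 E. apply NNPP. intro Hne. apply (Hinc k1 k2 Hne). rewrite E. apply initseg_refl.
Qed.

Section Subtree.
Context {S : node -> Prop}.
Hypothesis S_in_T : forall t, S t -> T t.
Hypothesis S_down : forall s t, S t -> T s -> initseg s t -> S s.

Definition minimal_outside (u : node) : Prop :=
  T u /\ ~ S u /\ forall b, lt b (height u) -> S (restr u b).

Lemma minimal_outside_antichain : antichain T minimal_outside.
Proof.
  assert (Hincomp : forall s t, minimal_outside s -> minimal_outside t -> s <> t -> ~ initseg s t).
  { intros s t [Ts [Ss _]] [Tt [_ Ht]] Hne Hst.
    pose proof (tree_has_height s Ts) as Ds. pose proof (tree_has_height t Tt) as Dt.
    destruct (lt_total (height s) (height t)) as [H | [H | H]].
    - apply Ss. rewrite (initseg_eq_restr s t _ Hst Ds). exact (Ht _ H).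
    - rewrite H in Ds. exact (Hne (initseg_same_height s t _ Hst Ds Dt)).
    - exact (initseg_height_le s t _ _ Hst Ds Dt H). }
  split; [now intros t [Tt _] |].
  intros s t Hs Ht Hne. split; apply Hincomp; auto.
Qed.

Lemma minimal_outside_bounded : exists a0, forall u, minimal_outside u -> lt (height u) a0.
Proof.
  destruct (kappa_regular _ (card_lt_kappa_image _ _ height _
              (antichain_card_lt _ minimal_outside_antichain))) as [a0 Ha0].
  exists a0. intros u Hu. apply Ha0. eauto.
Qed.

(* A node [t] above [x] outside [S] has a least restriction outside [S]; it is minimal outside [S], so its
   height lies below [a0], i.e. it is a restriction of [x] and hence in [S]. *)
Lemma cone_in_subtree a0 :
  (forall u, minimal_outside u -> lt (height u) a0) ->
  forall x, S x -> has_dom lt x a0 -> forall t, cone x t -> S t.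
Proof.
  intros Hbound x Sx Dx t [Tt Hxt]. apply NNPP. intro St.
  pose proof (tree_has_height t Tt) as Dt.
  destruct (lt_minimal (fun b => ~ lt (height t) b /\ ~ S (restr t b))) as [m [[Hmt Sm] Hmin]].
  { exists (height t). split; [apply lt_irrefl |].
    now rewrite (restr_above t (height t)) by (auto using lt_irrefl). }
  assert (Dm : has_dom lt (restr t m) m) by exact (has_dom_restr t _ m Dt Hmt).
  assert (Hm0 : lt m a0).
  { rewrite <- (height_eq _ _ Dm). apply Hbound.
    split; [now apply tree_restr |]. split; [exact Sm |].
    intros b Hb. rewrite (height_eq _ _ Dm) in Hb. rewrite restr_restr by exact Hb.
    apply NNPP. intro Sb. apply (Hmin b); [split |]; auto.
    intro H. exact (Hmt (lt_trans _ _ _ H Hb)). }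
  apply Sm. rewrite <- (restr_restr t m a0 Hm0), <- (initseg_eq_restr x t a0 Hxt Dx).
  apply (S_down _ x Sx); [apply tree_restr, S_in_T, Sx | apply initseg_restr].
Qed.

(* Every node of [S] is either of height below [a0] or lies in the cone of its restriction to [a0]. *)
Lemma subtree_small_of_small_cones a0 :
  (forall x, S x -> has_dom lt x a0 -> small (cone x)) -> small S.
Proof.
  intro Hcones.
  apply (card_lt_kappa_union node node (fun i => T i /\ ~ lt a0 (height i)) S (fun t => restr t a0)).
  - apply tree_card_lt_height_le.
  - intros t St. pose proof (S_in_T t St) as Tt. split; [now apply tree_restr |].
    destruct (restr_cases t a0 Tt) as [[H ->] | D].
    + intro H'. exact (lt_irrefl a0 (lt_trans _ _ _ H' H)).
    + rewrite (height_eq _ _ D). apply lt_irrefl.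
  - intros i _. destruct (classic (S i /\ has_dom lt i a0)) as [[Si Di] | Hi].
    + apply (card_lt_kappa_sub _ _ (cone i)); [| exact (Hcones i Si Di)].
      intros u [Su <-]. split; [exact (S_in_T u Su) | apply initseg_restr].
    + apply (card_lt_kappa_sub _ _ (fun v => v = i)); [| apply card_lt_kappa_singleton].
      intros u [Su <-].
      destruct (restr_cases u a0 (S_in_T u Su)) as [[_ ->] | D]; [reflexivity |].
      exfalso. apply Hi. split; [| exact D].
      apply (S_down _ u Su); [apply tree_restr, S_in_T, Su | apply initseg_restr].
Qed.

Lemma subtree_large_cone :
  streamlined_kappa_tree lt S -> exists x, S x /\ (forall t, cone x t -> S t) /\ large (cone x).
Proof.
  intro S_tree.
  destruct minimal_outside_bounded as [a0 Ha0].
  assert (Hx : exists x, S x /\ has_dom lt x a0 /\ large (cone x)).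
  { apply NNPP. intro Hsmall.
    apply (subtree_small_of_small_cones a0); [| exact (kappa_tree_large S S_tree)].
    intros x Sx Dx Hx. eauto. }
  destruct Hx as [x [Sx [Dx Hx]]].
  exists x. split; [exact Sx |]. split; [exact (cone_in_subtree a0 Ha0 x Sx Dx) | exact Hx].
Qed.

End Subtree.

End Souslin.

End KappaTree.

End Trees.

End Kappa.

Theorem proposition5p4 (K : Type) (lt : K -> K -> Prop) (X : Type)
  (Hkappa : regular_uncountable_cardinal K lt)
  (T : @node K X -> Prop)
  (HT : streamlined_kappa_Souslin_tree lt T)
  (Tseq : K -> @node K X -> Prop)
  (Hseq : forall eta, streamlined_kappa_subtree lt T (Tseq eta)) :
  exists eta rho, lt eta rho /\
    @card_eq_kappa K (@node K X) (fun t => Tseq eta t /\ Tseq rho t).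
Proof.
  destruct Hkappa as [lt_wo [segments_small [regular uncountable]]].
  pose proof (uncountable_nontrivial K uncountable) as nontrivial.
  destruct HT as [T_tree [_ no_antichain]].
  assert (Hcones : forall eta, exists x, Tseq eta x /\ (forall t, cone T x t -> Tseq eta t) /\
                                       @card_ge_kappa K _ (cone T x)).
  { intro eta. destruct (Hseq eta) as [S_in_T [S_down S_tree]].
    exact (subtree_large_cone lt_wo nontrivial segments_small regular T T_tree no_antichain
             S_in_T S_down S_tree). }
  destruct (functional_choice _ Hcones) as [x Hx].
  destruct (family_comparable lt_wo nontrivial segments_small regular T T_tree no_antichain x)
    as [eta [rho [Hne Hxx]]].
  { intro k. destruct (Hx k) as [Sx _]. apply (Hseq k), Sx. }
  assert (Hcap : forall t, cone T (x rho) t -> Tseq eta t /\ Tseq rho t).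
  { intros t Ht. split; [apply (Hx eta), (cone_antimono T _ _ Hxx t Ht) | apply (Hx rho), Ht]. }
  assert (Hin_T : forall t, Tseq eta t -> T t) by apply (Hseq eta).
  assert (Hlarge : @card_ge_kappa K _ (cone T (x rho))) by apply (Hx rho).
  destruct (lt_total lt_wo eta rho) as [H | [H | H]]; [exists eta, rho | contradiction | exists rho, eta];
    (split; [exact H |]);
    apply (card_eq_kappa_of_large_cone lt_wo nontrivial segments_small regular T T_tree _ (x rho));
    firstorder.
Qed.
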